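(* Let $n\geq 5$ be an odd integer and let $J_n$ be the flower snark. Then $\beta_\ell(J_n)=4n$ for every integer $\ell\geq 4$, and $\beta_\ell^s(J_n)=4n$ for every integer $\ell\geq 3$.
   Context: Flower snark $J_n$ ($n\geq 5$ odd): take $n$ disjoint stars $K_{1,3}$, the $i$th with vertices $T_i=\{a_i,b_i,c_i,d_i\}$, centre $b_i$ and leaves $a_i,c_i,d_i$; add the cycle $a_1a_2\cdots a_na_1$ and the cycle $c_1c_2\cdots c_nd_1d_2\cdots d_nc_1$. It has $4n$ vertices. $d$ is the shortest-path distance, $d(s,X)=\min_{x\in X}d(s,x)$ for nonempty $X$, $\mathcal{D}_S(X)=(d(s_1,X),\dots,d(s_k,X))$. $S$ is an $\{\ell\}$-resolving set if $\mathcal{D}_S(X)\neq\mathcal{D}_S(Y)$ for all distinct nonempty vertex sets $X,Y$ with $|X|,|Y|\leq\ell$; $S$ is an $\ell$-solid-resolving set if $\mathcal{D}_S(X)\neq\mathcal{D}_S(Y)$ for all distinct nonempty vertex sets $X,Y$ with $|X|\leq\ell$ ($Y$ arbitrary). $\beta_\ell$, $\beta_\ell^s$ denote the minimum sizes of such sets. *)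

From mathcomp Require Import all_boot.
Set Implicit Arguments. Unset Strict Implicit. Unset Printing Implicit Defensive.

Section Metric.
Variables (T : finType) (e : rel T).

Fixpoint ball (k : nat) (u : T) : {set T} :=
  match k with
  | 0 => [set u]
  | k'.+1 => ball k' u :|: [set y | [exists x in ball k' u, e x y]]
  end.

(* shortest-path distance; every finite distance is < #|T|, so the search
   over 0..#|T|-1 finds it (value #|T| only if unreachable). *)
Definition dist (u v : T) : nat := find (fun k => v \in ball k u) (iota 0 #|T|).

(* d(s, X) = min_{x in X} d(s, x), meaningful for nonempty X *)
Definition dist_set (s : T) (X : {set T}) : nat :=
  \big[minn/#|T|]_(x in X) dist s x.

Definition separates (S X Y : {set T}) : bool :=
  [exists s in S, dist_set s X != dist_set s Y].

Definition l_resolving (l : nat) (S : {set T}) : bool :=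
  [forall X : {set T}, forall Y : {set T},
    [&& X != set0, Y != set0, X != Y, #|X| <= l & #|Y| <= l] ==> separates S X Y].

Definition l_solid_resolving (l : nat) (S : {set T}) : bool :=
  [forall X : {set T}, forall Y : {set T},
    [&& X != set0, Y != set0, X != Y & #|X| <= l] ==> separates S X Y].

(* minimum size of a set satisfying P; the default #|T|.+1 is never the
   size of a vertex set, so beta = k forces existence of such a set *)
Definition min_card (P : pred {set T}) : nat :=
  \big[minn/#|T|.+1]_(S : {set T} | P S) #|S|.

Definition beta (l : nat) : nat := min_card (l_resolving l).
Definition beta_s (l : nat) : nat := min_card (l_solid_resolving l).

End Metric.

(* Flower snark J_n on vertex type 'I_n * 'I_4:
   (i,0)=a_i, (i,1)=b_i, (i,2)=c_i, (i,3)=d_i. *)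
Definition cd_pos (n : nat) (v : 'I_n * 'I_4) : nat :=
  if val v.2 == 2 then val v.1 else n + val v.1.
Arguments cd_pos n : clear implicits.

Definition flower_adj (n : nat) : rel ('I_n * 'I_4) :=
  fun u v =>
    let i := val u.1 in let t := val u.2 in
    let j := val v.1 in let s := val v.2 in
    [||
        (i == j) && (((t == 1) && (s != 1)) || ((s == 1) && (t != 1))),
        [&& t == 0, s == 0 & (j == (i + 1) %% n) || (i == (j + 1) %% n)]
      | (* cycle c_1..c_n d_1..d_n c_1, positions c_i -> i, d_i -> n+i *)
        [&& 2 <= t, 2 <= s &
          (cd_pos n v == (cd_pos n u + 1) %% (2 * n))
          || (cd_pos n u == (cd_pos n v + 1) %% (2 * n))]].
Arguments flower_adj n : clear implicits.

(* If every vertex v has a nonempty in-neighbourhood N(v) of size at most 3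
   with v not in N(v), then any shortest walk from s <> v to v enters v from
   N(v), so d(s, N(v) + v) = d(s, N(v)).  Only v itself separates the pair
   N(v), N(v) + v, whose sizes are at most 3 and 4; hence every vertex lies
   in every 4-resolving and every 3-solid-resolving set.  Conversely the whole
   vertex set separates any X <> Y through a vertex x of their symmetric
   difference, at distance 0 from one set and positive distance from the other.
   The flower snark is cubic. *)
From mathcomp Require Import all_boot zify.
Set Implicit Arguments. Unset Strict Implicit. Unset Printing Implicit Defensive.

Lemma geq_bigmin_cond (I : finType) (P : pred I) (F : I -> nat) d i :
  P i -> \big[minn/d]_(j | P j) F j <= F i.
Proof.
move=> Pi; rewrite -big_filter.
have : i \in [seq j <- index_enum I | P j] by rewrite mem_filter Pi mem_index_enum.
elim: [seq j <- _ | _] => //= j r IHr; rewrite big_cons inE geq_min.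
by case/orP => [/eqP <- | /IHr ->]; rewrite ?leqnn ?orbT.
Qed.

Section Resolving.
Variables (T : finType) (e : rel T).

Lemma card_gt0_of (v : T) : 0 < #|T|.
Proof. by apply/card_gt0P; exists v. Qed.

Lemma dist_le_mem_ball k u v : k < #|T| -> v \in ball e k u -> dist e u v <= k.
Proof.
move=> lt_k vk; rewrite /dist leqNgt; apply/negP => /(before_find 0).
by rewrite nth_iota // add0n vk.
Qed.

Lemma dist_le_card u v : dist e u v <= #|T|.
Proof. by rewrite /dist -{2}(size_iota 0 #|T|) find_size. Qed.

Lemma mem_ball_dist u v : dist e u v < #|T| -> v \in ball e (dist e u v) u.
Proof.
move=> lt_d; have := lt_d; rewrite /dist -{2}(size_iota 0 #|T|) -has_find.
by move=> /(nth_find 0); rewrite nth_iota.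
Qed.

Lemma dist_xx u : dist e u u = 0.
Proof.
by apply/eqP; rewrite -leqn0 dist_le_mem_ball ?(card_gt0_of u) //= set11.
Qed.

Lemma dist_gt0 u v : v != u -> 0 < dist e u v.
Proof.
move=> vu; rewrite lt0n; apply/eqP => d0.
have := @mem_ball_dist u v; rewrite d0 /= inE (negbTE vu).
by move/(_ (card_gt0_of u)).
Qed.

Lemma dist_set_le s (X : {set T}) x : x \in X -> dist_set e s X <= dist e s x.
Proof. exact: geq_bigmin_cond. Qed.

Lemma dist_set_le_card s (X : {set T}) : dist_set e s X <= #|T|.
Proof.
apply: (big_ind (fun m => m <= #|T|)) => // [m p|x _]; last exact: dist_le_card.
by rewrite geq_min => ->.
Qed.

Lemma dist_set_ge s (X : {set T}) m :
  m <= #|T| -> (forall x, x \in X -> m <= dist e s x) -> m <= dist_set e s X.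
Proof.
move=> le_m ge_m; apply: (big_ind (fun p => m <= p)) => // p q.
by rewrite leq_min => ->.
Qed.

Definition nbhd (v : T) : {set T} := [set x | e x v].

Lemma dist_set_le_nbhd s v (X : {set T}) :
  s != v -> nbhd v \subset X -> dist_set e s X <= dist e s v.
Proof.
move=> sv NvX; have [lt_d|] := ltnP (dist e s v) #|T|; last first.
  exact: leq_trans (dist_set_le_card s X).
have := mem_ball_dist lt_d; case d_sv: (dist e s v) lt_d => [|k] lt_d.
  by rewrite /= inE eq_sym (negbTE sv).
have lt_k : k < #|T| by apply: ltnW.
rewrite /= in_setU in_set => /orP[vk | /exists_inP[x xk exv]].
  by have := dist_le_mem_ball lt_k vk; rewrite d_sv ltnn.
have Xx : x \in X by apply: (subsetP NvX); rewrite inE.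
by rewrite (leq_trans (dist_set_le s Xx)) // (leq_trans (dist_le_mem_ball lt_k xk)).
Qed.

Lemma dist_set_setU1_nbhd s v (X : {set T}) :
  s != v -> nbhd v \subset X -> dist_set e s (v |: X) = dist_set e s X.
Proof.
move=> sv NvX; apply/eqP; rewrite eqn_leq.
apply/andP; split; apply: dist_set_ge => [|x]; rewrite ?dist_set_le_card //.
  by move=> Xx; apply: dist_set_le; rewrite setU1r.
by case/setU1P => [->|Xx]; [exact: dist_set_le_nbhd | exact: dist_set_le].
Qed.

Lemma separates_setT (X Y : {set T}) : X != Y -> separates e setT X Y.
Proof.
have sep (A B : {set T}) x : x \in A -> x \notin B -> dist_set e x A != dist_set e x B.
  move=> Ax Bx; rewrite neq_ltn; apply/orP; left.
  rewrite (leq_trans _ (dist_set_ge (m := 1) _ _)) ?card_gt0_of //.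
    by rewrite -[_ < _]/(_ <= 0) -(dist_xx x) dist_set_le.
  by move=> y By; apply: dist_gt0; apply: contraNneq Bx => <-.
move=> neqXY; have [x XYx] : exists x, (x \in X) != (x \in Y).
  apply/existsP; apply: contraNT neqXY => /existsPn eqXY.
  by apply/eqP/setP => x; apply/eqP/negPn.
apply/exists_inP; exists x; rewrite ?inE //.
case: (boolP (x \in X)) XYx => Xx; case: (boolP (x \in Y)) => Yx // _.
  exact: sep.
by rewrite eq_sym; apply: sep.
Qed.

Lemma min_card_setT (P : pred {set T}) :
  (forall S, P S -> S = setT) -> P setT -> min_card P = #|T|.
Proof.
move=> onlyT PT; apply/eqP; rewrite eqn_leq -{1}cardsT geq_bigmin_cond //=.
apply: (big_ind (fun m => #|T| <= m)) => // [m p|S /onlyT ->]; last by rewrite cardsT.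
by rewrite leq_min => ->.
Qed.

Hypothesis nbhd_small :
  forall v, [/\ nbhd v != set0, v \notin nbhd v & #|nbhd v| <= 3].

Lemma mem_of_separates_nbhd (S : {set T}) v :
  separates e S (nbhd v) (v |: nbhd v) -> v \in S.
Proof.
case/exists_inP => s Ss; have [<- // | sv] := eqVneq s v.
by rewrite dist_set_setU1_nbhd ?eqxx.
Qed.

Lemma nbhd_pair v :
  [/\ nbhd v != set0, v |: nbhd v != set0, nbhd v != v |: nbhd v,
      #|nbhd v| <= 3 & #|v |: nbhd v| <= 4].
Proof.
have [Nv0 vNv le3] := nbhd_small v; split => //.
- by apply/set0Pn; exists v; rewrite setU11.
- by apply: contraNneq vNv => ->; rewrite setU11.
- by rewrite cardsU1 vNv.
Qed.

Lemma l_resolving_setT l S : 4 <= l -> l_resolving e l S -> S = setT.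
Proof.
move=> le4l resS; apply/setP => v; rewrite inE; apply: mem_of_separates_nbhd.
have [? ? ? le3 le4] := nbhd_pair v; apply: (implyP (forallP (forallP resS _) _)).
by apply/and5P; split; rewrite // (leq_trans _ le4l) // (leq_trans le3).
Qed.

Lemma l_solid_resolving_setT l S : 3 <= l -> l_solid_resolving e l S -> S = setT.
Proof.
move=> le3l resS; apply/setP => v; rewrite inE; apply: mem_of_separates_nbhd.
have [? ? ? le3 _] := nbhd_pair v; apply: (implyP (forallP (forallP resS _) _)).
by apply/and4P; split; rewrite // (leq_trans le3).
Qed.

Lemma beta_full l : 4 <= l -> beta e l = #|T|.
Proof.
move=> le4l; apply: min_card_setT => [S|]; first exact: l_resolving_setT.
apply/forallP => X; apply/forallP => Y; apply/implyP => /and5P[_ _ neqXY _ _].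
exact: separates_setT.
Qed.

Lemma beta_s_full l : 3 <= l -> beta_s e l = #|T|.
Proof.
move=> le3l; apply: min_card_setT => [S|]; first exact: l_solid_resolving_setT.
apply/forallP => X; apply/forallP => Y; apply/implyP => /and4P[_ _ neqXY _].
exact: separates_setT.
Qed.

End Resolving.

Definition star_adj n (u v : 'I_n * 'I_4) : bool :=
  (val u.1 == val v.1) &&
  (((val u.2 == 1) && (val v.2 != 1)) || ((val v.2 == 1) && (val u.2 != 1))).

Definition cycle_next n (u v : 'I_n * 'I_4) : bool :=
  [&& val u.2 == 0, val v.2 == 0 & val v.1 == (val u.1 + 1) %% n]
  || [&& 2 <= val u.2, 2 <= val v.2 & cd_pos n v == (cd_pos n u + 1) %% (2 * n)].

Lemma flower_adjE n (u v : 'I_n * 'I_4) :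
  flower_adj n u v = [|| star_adj u v, cycle_next u v | cycle_next v u].
Proof.
rewrite /flower_adj /star_adj /cycle_next /=.
case: (_ && _) => //=.
case: (val u.2 == 0); case: (val v.2 == 0); case: (2 <= val u.2); case: (2 <= val v.2);
  rewrite /= ?orbF //.
by rewrite -!orbA; congr orb; apply: orbCA.
Qed.

Lemma succ_mod_neq m i : 1 < m -> i < m -> (i + 1) %% m != i.
Proof.
move=> m_gt1 lt_im; have [lt_Sim | le_mSi] := ltnP i.+1 m.
  by rewrite addn1 modn_small // gtn_eqF.
have -> : i + 1 = m by lia.
by rewrite modnn; lia.
Qed.

Lemma succ_mod_inj m i j : i < m -> j < m -> (i + 1) %% m = (j + 1) %% m -> i = j.
Proof. by move=> lt_im lt_jm /eqP; rewrite eqn_modDr !modn_small // => /eqP. Qed.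

Lemma pair_ord_eq n m (x y : 'I_n * 'I_m) :
  val x.1 = val y.1 -> val x.2 = val y.2 -> x = y.
Proof. by case: x y => [i k] [j l] /= /val_inj -> /val_inj ->. Qed.

Lemma cd_pos_lt n (v : 'I_n * 'I_4) : cd_pos n v < 2 * n.
Proof. have : val v.1 < n := ltn_ord v.1; rewrite /cd_pos; case: ifP => _; lia. Qed.

Lemma cd_pos_inj n (x y : 'I_n * 'I_4) :
  2 <= val x.2 -> 2 <= val y.2 -> cd_pos n x = cd_pos n y -> x = y.
Proof.
have : val x.1 < n := ltn_ord x.1; have : val y.1 < n := ltn_ord y.1.
have : val x.2 < 4 := ltn_ord x.2; have : val y.2 < 4 := ltn_ord y.2.
rewrite /cd_pos; case: ifP => /eqP hx; case: ifP => /eqP hy => *; apply: pair_ord_eq; lia.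
Qed.

Lemma cycle_next_irr n (v : 'I_n * 'I_4) : 1 < n -> ~~ cycle_next v v.
Proof.
move=> n_gt1; rewrite /cycle_next negb_or !negb_and.
rewrite [_ == (_ + 1) %% n]eq_sym [_ == (_ + 1) %% (2 * n)]eq_sym.
have n2_gt1 : 1 < 2 * n by lia.
by rewrite (succ_mod_neq n_gt1 (ltn_ord v.1)) (succ_mod_neq n2_gt1 (cd_pos_lt v)) !orbT.
Qed.

Lemma cycle_next_spokes n (u v : 'I_n * 'I_4) :
  cycle_next u v -> (val u.2 != 1) && (val v.2 != 1).
Proof. by case/orP => /and3P[hu hv _]; apply/andP; split; lia. Qed.

Lemma cycle_next_injl n (x y v : 'I_n * 'I_4) :
  cycle_next x v -> cycle_next y v -> x = y.
Proof.
case/orP => /and3P[x_ v_ /eqP xv]; case/orP => /and3P[y_ v_' /eqP yv];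
  try by exfalso; lia.
- apply: pair_ord_eq; last by rewrite (eqP x_) (eqP y_).
  by apply: (succ_mod_inj (ltn_ord x.1) (ltn_ord y.1)); rewrite -xv -yv.
- apply: cd_pos_inj => //.
  by apply: (succ_mod_inj (cd_pos_lt x) (cd_pos_lt y)); rewrite -xv -yv.
Qed.

Lemma cycle_next_injr n (v x y : 'I_n * 'I_4) :
  cycle_next v x -> cycle_next v y -> x = y.
Proof.
case/orP => /and3P[v_ x_ /eqP vx]; case/orP => /and3P[v_' y_ /eqP vy];
  try by exfalso; lia.
- by apply: pair_ord_eq; rewrite ?vx ?vy // (eqP x_) (eqP y_).
- by apply: cd_pos_inj; rewrite ?vx ?vy.
Qed.

Lemma card_star_nbhd n (v : 'I_n * 'I_4) : #|[set x | star_adj x v]| <= 3.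
Proof.
have sub : [set x | star_adj x v] \subset pair v.1 @: [set~ v.2].
  apply/subsetP => -[i k]; rewrite inE /star_adj /= => /andP[/eqP/val_inj -> hk].
  apply/imsetP; exists k => //; rewrite !inE; apply: contraTneq hk => ->.
  by case: (_ == 1).
rewrite (leq_trans (subset_leq_card sub)) // (leq_trans (leq_imset_card _ _)) //.
by rewrite cardsC1 card_ord.
Qed.

Lemma card_star_nbhd_spoke n (v : 'I_n * 'I_4) :
  val v.2 != 1 -> #|[set x | star_adj x v]| <= 1.
Proof.
move=> v_; apply/card_le1_eqP => x y; rewrite !inE /star_adj (negbTE v_) !andbT !orbF.
by move=> /andP[/eqP x1 /eqP x2] /andP[/eqP y1 /eqP y2]; apply: pair_ord_eq; rewrite ?x1 ?x2.
Qed.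

Lemma card_cycle_prev n (v : 'I_n * 'I_4) : #|[set x | cycle_next x v]| <= 1.
Proof. by apply/card_le1_eqP => x y; rewrite !inE => xv yv; apply: cycle_next_injl yv xv. Qed.

Lemma card_cycle_succ n (v : 'I_n * 'I_4) : #|[set x | cycle_next v x]| <= 1.
Proof. by apply/card_le1_eqP => x y; rewrite !inE => vx vy; apply: cycle_next_injr vy vx. Qed.

Lemma flower_nbhd n (v : 'I_n * 'I_4) : 1 < n ->
  [/\ nbhd (flower_adj n) v != set0, v \notin nbhd (flower_adj n) v
    & #|nbhd (flower_adj n) v| <= 3].
Proof.
move=> n_gt1; have -> : nbhd (flower_adj n) v =
    [set x | star_adj x v] :|: [set x | cycle_next x v] :|: [set x | cycle_next v x].
  by apply/setP => x; rewrite !inE flower_adjE orbA.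
split.
- apply/set0Pn; exists (v.1, if val v.2 == 1 then ord0 else Ordinal (isT : 1 < 4)).
  by rewrite !inE /star_adj eqxx; case: (val v.2 == 1).
- by rewrite !inE /star_adj andbN orbF andbF (negbTE (cycle_next_irr v n_gt1)).
rewrite (leq_trans (leq_card_setU _ _)) //.
rewrite (leq_trans (leq_add (leq_card_setU _ _) (leqnn _))) //.
have [v_hub | v_spoke] := boolP (val v.2 == 1); last first.
  by rewrite -[3]/(1 + 1 + 1) !leq_add ?card_star_nbhd_spoke ?card_cycle_prev ?card_cycle_succ.
have [prev0 succ0] : [set x | cycle_next x v] = set0 /\ [set x | cycle_next v x] = set0.
  by split; apply/setP => x; rewrite !inE; apply: contraTF v_hub => /cycle_next_spokes/andP[].
by rewrite prev0 succ0 cards0 !addn0 card_star_nbhd.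
Qed.

Theorem mainTheorem14 (n : nat) :
  5 <= n -> odd n ->
  (forall l : nat, 4 <= l -> beta (flower_adj n) l = 4 * n) /\
  (forall l : nat, 3 <= l -> beta_s (flower_adj n) l = 4 * n).
Proof.
move=> n_ge5 _.
have n_gt1 : 1 < n by apply: leq_trans n_ge5.
have card_V : #|{: 'I_n * 'I_4}| = 4 * n by rewrite card_prod !card_ord mulnC.
split=> l le_l; rewrite -card_V; [apply: beta_full | apply: beta_s_full] => // v.
  exact: flower_nbhd.
exact: flower_nbhd.
Qed.
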